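(* Let $C\in M_n(\mathbb{C})$ be a contraction, $D=I-C^*C$, $d=\operatorname{rank}D$, and let $T_j$ be its partial isometry tower. Define polynomials $\phi_{-1}=0$, $\phi_0=1$, $\phi_{m+1}(z,r)=z\phi_m(z,r)-r^2\phi_{m-1}(z,r)$. Then for every $j\ge1$, every $\theta\in\mathbb{R}$ and all $z,r\in\mathbb{C}$ with $\phi_j(z,r)\ne0$, $$\det\bigl(zI-2rH_{T_j}(\theta)\bigr)=\phi_j(z,r)^d\det\!\Bigl(zI-2rH_C(\theta)-r^2\frac{\phi_{j-1}(z,r)}{\phi_j(z,r)}D\Bigr),$$ where $2rH_X(\theta)$ means $re^{-i\theta}X+re^{i\theta}X^*$. Equivalently, writing $z=2ru$ with $r\neq 0$ and $U_k$ for the Chebyshev polynomials of the second kind, $$\det\bigl(zI-2rH_{T_j}(\theta)\bigr)=(2r)^n r^{jd}U_j(u)^d\det\bigl(uI-H_C(\theta)-\tau_j(u)D\bigr),\qquad \tau_j(u)=\frac{U_{j-1}(u)}{2U_j(u)}.$$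
   Context: For $X\in M_n(\mathbb{C})$ and $\theta\in\mathbb{R}$, $H_X(\theta):=\operatorname{Re}(e^{-i\theta}X)=\frac12(e^{-i\theta}X+e^{i\theta}X^* )$. A contraction is a matrix with $\|C\|\le 1$. For a contraction $C$, $D_C=I-C^*C$, $d=\operatorname{rank}D_C$, $B_C$ is a $d\times n$ matrix of full row rank with $B_C^*B_C=D_C$ (the matrix of $D_C^{1/2}$ restricted to $\operatorname{Im}D_C$, zero on its orthogonal complement), $\mathcal{A}(C)=\begin{bmatrix}0&B_C\\0&C\end{bmatrix}$, and the partial isometry tower is $T_0=C$, $T_{j+1}=\mathcal{A}(T_j)$. Chebyshev polynomials of the second kind: $U_{-1}=0$, $U_0=1$, $U_{k+1}(u)=2uU_k(u)-U_{k-1}(u)$. *)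

From HB Require Import structures.
From mathcomp Require Import all_boot all_order all_algebra.
From mathcomp.real_closed Require Import complex.
From mathcomp Require Import classical_sets reals trigo.
Set Implicit Arguments. Unset Strict Implicit. Unset Printing Implicit Defensive.
Import Order.TTheory GRing.Theory Num.Theory.
Local Open Scope ring_scope.
Local Open Scope complex_scope.

Section Defs.
Variable R : realType.
Local Notation C := R[i].

Definition ctrans m n (X : 'M[C]_(m, n)) : 'M[C]_(n, m) := map_mx conjc X^T.

Definition sqnorm n (x : 'cV[C]_n) : C := \sum_(i < n) `|x i 0| ^+ 2.

Definition contraction n (X : 'M[C]_n) : Prop :=
  forall x : 'cV[C]_n, sqnorm (X *m x) <= sqnorm x.

Definition defect n (X : 'M[C]_n) : 'M[C]_n := 1%:M - ctrans X *m X.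

Definition defect_factor n (X : 'M[C]_n) (B : 'M[C]_(\rank (defect X), n)) : Prop :=
  row_free B /\ ctrans B *m B = defect X.

Definition Bmx n (X : 'M[C]_n) : 'M[C]_(\rank (defect X), n) :=
  xget 0 [set B | @defect_factor n X B].

Record sqmx := SqMx { sz : nat; mx : 'M[C]_sz }.

Definition Aop (X : sqmx) : sqmx :=
  @SqMx (\rank (defect (mx X)) + sz X) (block_mx 0 (Bmx (mx X)) 0 (mx X)).

Definition tower n (X : 'M[C]_n) (j : nat) : sqmx := iter j Aop (SqMx X).

Definition expi (t : R) : C := (cos t) +i* (sin t).

Definition Hpart n (X : 'M[C]_n) (t : R) : 'M[C]_n :=
  2^-1 *: (expi (- t) *: X + expi t *: ctrans X).

(* phi_{-1} = 0, phi_0 = 1, phi_{m+1} = z phi_m - r^2 phi_{m-1};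
   phipair m = (phi_{m-1}, phi_m) *)
Fixpoint phipair (z r : C) (m : nat) : C * C :=
  match m with
  | 0 => (0, 1)
  | m'.+1 => let p := phipair z r m' in (p.2, z * p.2 - r ^+ 2 * p.1)
  end.
Definition phi (z r : C) (m : nat) : C := (phipair z r m).2.

(* Chebyshev polynomials of the second kind: U_{-1}=0, U_0=1,
   U_{k+1} = 2u U_k - U_{k-1};  Upair k = (U_{k-1}, U_k) *)
Fixpoint Upair (u : C) (k : nat) : C * C :=
  match k with
  | 0 => (0, 1)
  | k'.+1 => let p := Upair u k' in (p.2, 2 * u * p.2 - p.1)
  end.
Definition chebU (u : C) (k : nat) : C := (Upair u k).2.

Definition tau (u : C) (j : nat) : C := chebU u j.-1 / (2 * chebU u j).

End Defs.

(* Write M_T := a T + b T^* with a b = r^2, so that 2 r H_T(θ) = M_T for a = r e^{-iθ},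
   b = r e^{iθ}.  The defect of A(T) = [[0, B_T], [0, T]] is diag(I_d, 0), factored by
   [I_d 0], so every level of the tower has a rank-d defect D_T = B_T^* B_T.  A Schur
   complement on the scalar upper-left block of
     φ_k (z - M_{A(T)}) - r^2 φ_{k-1} diag(I_d, 0)
   turns its determinant into that of φ_{k+1} (z - M_T) - r^2 φ_k D_T times
   φ_{k+1}^d (φ_k / φ_{k+1})^{size T}; iterating j times from k = 0 gives the identity.  Since the
   intermediate φ_k(z) may vanish, the induction runs with z an indeterminate, where every
   φ_k is monic and can be cancelled, and is evaluated at z afterwards.  The Chebyshev
   form follows from φ_k(2ru, r) = r^k U_k(u).  The factor B_C of the defect of C itself
   comes from the spectral theorem, D_C being positive semidefinite. *)

From HB Require Import structures.
From mathcomp Require Import all_boot all_order all_algebra.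
From mathcomp.real_closed Require Import complex.
From mathcomp Require Import classical_sets reals trigo.
From mathcomp Require Import spectral ring zify.
Set Implicit Arguments. Unset Strict Implicit. Unset Printing Implicit Defensive.
Import Order.TTheory GRing.Theory Num.Theory.
Local Open Scope ring_scope.

(* (φ_{m-1}, φ_m) over an arbitrary ring, so that z can be a polynomial indeterminate. *)
Fixpoint phirec (K : pzRingType) (z r : K) (m : nat) : K * K :=
  if m is m'.+1 then let p := phirec z r m' in (p.2, z * p.2 - r ^+ 2 * p.1)
  else (0, 1).

Lemma phipairE (R : realType) (z r : R[i]) m : phipair z r m = phirec z r m.
Proof. by elim: m => //= m ->. Qed.

Lemma rmorph_phirec (K L : pzRingType) (f : {rmorphism K -> L}) (z r : K) m :
  f (phirec z r m).1 = (phirec (f z) (f r) m).1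
  /\ f (phirec z r m).2 = (phirec (f z) (f r) m).2.
Proof.
elim: m => [|m [IH1 IH2]] /=; first by rewrite rmorph0 rmorph1.
by rewrite rmorphB !rmorphM IH1 IH2.
Qed.

Lemma size_phirec_X (K : nzRingType) (c : K) k :
  size (phirec 'X c%:P k).2 = k.+1 /\ (size (phirec 'X c%:P k).1 <= k)%N.
Proof.
elim: k => [|k [IH2 IH1]] /=; first by rewrite size_poly1 size_poly0.
split; last by rewrite IH2.
have p_neq0 : (phirec 'X c%:P k).2 != 0 by rewrite -size_poly_eq0 IH2.
rewrite -commr_polyX size_addl size_mulX // IH2 // size_opp -rmorphXn mul_polyC.
by rewrite ltnS (leq_trans (size_scale_leq _ _)) // (leq_trans IH1).
Qed.

Lemma phirec_X_neq0 (K : nzRingType) (c : K) k : (phirec 'X c%:P k).2 != 0.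
Proof. by rewrite -size_poly_eq0 (size_phirec_X c k).1. Qed.

Lemma det_block_scalar (K : comRingType) d m (p : K) (U : 'M[K]_(d, m))
    (V : 'M[K]_(m, d)) (N : 'M[K]_m) :
  \det (block_mx p%:M U V N) * p ^+ m = p ^+ d * \det (p *: N - V *m U).
Proof.
have E : block_mx p%:M U V N *m block_mx 1%:M (- U) 0 p%:M
       = block_mx p%:M 0 V (p *: N - V *m U).
  rewrite mulmx_block !mulmx1 !mulmx0 !addr0 !mulmxN !mul_scalar_mx !mul_mx_scalar.
  by rewrite addNr addrC.
have := congr1 determinant E.
by rewrite det_mulmx det_ublock det_lblock !det_scalar expr1n mul1r => ->.
Qed.

Section PhiPencil.
Variables (K : comRingType) (x r : K).
Local Notation ph k := (phirec x r k).2.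

Definition phi_pencil m (A E : 'M[K]_m) k : 'M[K]_m :=
  ph k *: (x%:M - A) - (r ^+ 2 * (phirec x r k).1) *: E.

Lemma phi_pencil0 m (A E : 'M[K]_m) : phi_pencil A E 0 = x%:M - A.
Proof. by rewrite /phi_pencil /= mulr0 scale0r subr0 scale1r. Qed.

Lemma det_phi_pencil_block d m (a b : K) (U : 'M[K]_(d, m)) (V : 'M[K]_(m, d))
    (A : 'M[K]_m) k : a * b = r ^+ 2 ->
  \det (phi_pencil (block_mx 0 (a *: U) (b *: V) A) (block_mx 1%:M 0 0 0) k)
    * ph k.+1 ^+ m
  = ph k.+1 ^+ d * ph k ^+ m * \det (phi_pencil A (V *m U) k.+1).
Proof.
move=> abr; have -> : phi_pencil (block_mx 0 (a *: U) (b *: V) A) (block_mx 1%:M 0 0 0) k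
    = block_mx (ph k.+1)%:M (- (ph k * a) *: U) (- (ph k * b) *: V) (ph k *: (x%:M - A)).
  rewrite /phi_pencil (scalar_mx_block d m x) opp_block_mx add_block_mx !scale_block_mx.
  rewrite opp_block_mx add_block_mx !scaler0 !subr0 !sub0r.
  by rewrite !scale_scalar_mx mulr1 -raddfB /= mulrC !scalerN !scalerA !scaleNr.
rewrite det_block_scalar -mulrA -[_ * \det _]detZ; congr (_ * \det _).
rewrite -scalemxAl -scalemxAr /phi_pencil [RHS]scalerBr !scalerA mulrNN mulrACA [b * a]mulrC abr.
by congr (_ *: _ - _ *: _); rewrite /=; ring.
Qed.

End PhiPencil.

Lemma map_phi_pencil (K L : comRingType) (f : {rmorphism K -> L}) (x r : K) m
    (A E : 'M[K]_m) k :
  map_mx f (phi_pencil x r A E k)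
  = phi_pencil (f x) (f r) (map_mx f A) (map_mx f E) k.
Proof.
rewrite /phi_pencil map_mxB !map_mxZ map_mxB map_scalar_mx rmorphM rmorphXn.
by have [-> ->] := rmorph_phirec f x r k.
Qed.

Section ConjugateTranspose.
Variable R : realType.
Local Notation C := R[i].

Lemma ctransK m n (A : 'M[C]_(m, n)) : ctrans (ctrans A) = A.
Proof. exact: trmxCK. Qed.

Lemma ctransM m n p (A : 'M[C]_(m, n)) (B : 'M[C]_(n, p)) :
  ctrans (A *m B) = ctrans B *m ctrans A.
Proof. by rewrite /ctrans trmx_mul map_mxM. Qed.

Lemma ctrans0 m n : ctrans (0 : 'M[C]_(m, n)) = 0.
Proof. by rewrite /ctrans trmx0 map_mx0. Qed.

Lemma ctrans_block m1 m2 n1 n2 (A : 'M[C]_(m1, n1)) (B : 'M[C]_(m1, n2))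
    (A' : 'M[C]_(m2, n1)) (B' : 'M[C]_(m2, n2)) :
  ctrans (block_mx A B A' B') = block_mx (ctrans A) (ctrans A') (ctrans B) (ctrans B').
Proof. by rewrite /ctrans tr_block_mx map_block_mx. Qed.

Lemma mulmx_ctrans_eq0 m n (A : 'M[C]_(m, n)) : A *m ctrans A = 0 -> A = 0.
Proof.
move=> /matrixP AA0; apply/matrixP => i j; rewrite mxE.
have /eqP := AA0 i i; rewrite !mxE psumr_eq0 => [/allP/(_ j (mem_index_enum _))|k _].
  by rewrite /= !mxE mul_conjC_eq0 => /eqP.
by rewrite !mxE mul_conjC_ge0.
Qed.

Lemma mxrank_ctrans_mul m n (B : 'M[C]_(m, n)) : \rank (ctrans B *m B) = \rank B.
Proof.
apply/eqP; rewrite eqn_leq mxrankM_maxr /=.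
have /mxrankS : (kermx (ctrans B *m B) <= kermx (ctrans B))%MS.
  apply/sub_kermxP/mulmx_ctrans_eq0.
  by rewrite ctransM ctransK mulmxA -(mulmxA (kermx _)) mulmx_ker mul0mx.
rewrite !mxrank_ker /ctrans mxrank_map mxrank_tr.
have := rank_leq_col (ctrans B *m B); have := rank_leq_col B; lia.
Qed.

End ConjugateTranspose.

Section Defect.
Variable R : realType.
Local Notation C := R[i].

Lemma defect_factor_Bmx m (Y : 'M[C]_m) k (B : 'M[C]_(k, m)) :
  row_free B -> ctrans B *m B = defect Y -> defect_factor (Bmx Y).
Proof.
move=> freeB BB; apply: xgetPex; rewrite /defect_factor.
move: (defect Y) BB => D BB.
have : k = \rank D by rewrite -BB mxrank_ctrans_mul (eqP freeB).
by move: (\rank D) => k' ek; case: k' / ek; exists B.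
Qed.

Lemma defect_block_mx d m (B : 'M[C]_(d, m)) (Y : 'M[C]_m) :
  ctrans B *m B = defect Y -> defect (block_mx 0 B 0 Y) = block_mx 1%:M 0 0 0.
Proof.
move=> BB; rewrite /defect ctrans_block !ctrans0 mulmx_block !mul0mx !mulmx0 !addr0.
rewrite BB /defect (scalar_mx_block d m 1) opp_block_mx add_block_mx !oppr0.
by rewrite !addr0 subrK subrr.
Qed.

Lemma row_mx10_factor d m :
  let B : 'M[C]_(d, d + m) := row_mx 1%:M 0 in
  row_free B /\ ctrans B *m B = block_mx 1%:M 0 0 0.
Proof.
split; first by apply/row_freeP; exists (col_mx 1%:M 0); rewrite mul_row_col mul1mx mul0mx addr0.
by rewrite /ctrans tr_row_mx map_col_mx trmx1 map_mx1 trmx0 map_mx0 mul_col_row !mul1mx !mul0mx.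
Qed.

Lemma defect_ctrans n (X : 'M[C]_n) : ctrans (defect X) = defect X.
Proof.
by rewrite /defect /ctrans linearB /= map_mxB trmx1 map_mx1 -/(ctrans _) ctransM ctransK.
Qed.

Lemma contraction_defect_form n (X : 'M[C]_n) (x : 'cV[C]_n) :
  contraction X -> 0 <= (ctrans x *m defect X *m x) 0 0.
Proof.
have sqnormE (y : 'cV[C]_n) : sqnorm y = (ctrans y *m y) 0 0.
  by rewrite /sqnorm !mxE; apply: eq_bigr => i _; rewrite normCKC !mxE.
move=> /(_ x); rewrite -subr_ge0 !sqnormE /defect mulmxBr mulmx1 mulmxBl ctransM !mulmxA.
by rewrite [X in _ -> _ <= X]mxE [X in _ -> _ <= _ + X]mxE.
Qed.

End Defect.

Section UnitaryDiagFactor.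
Variables (R : realType) (n : nat) (P : 'M[R[i]]_n) (l : 'rV[R[i]]_n).
Hypotheses (unitaryP : P \is unitarymx) (l_ge0 : forall i, 0 <= l 0 i).

Let S := [set i | l 0 i != 0].
Let f : 'I_#|S| -> 'I_n := enum_val.
Let sqrtl j := sqrtC (l 0 (f j)).
Let B := \matrix_(j < #|S|, b < n) (sqrtl j * P (f j) b).

Let sqrtl_conj j : conjc (sqrtl j) = sqrtl j.
Proof. by apply: geC0_conj; rewrite sqrtC_ge0. Qed.

Let sqrtlK j : sqrtl j * sqrtl j = l 0 (f j).
Proof. by rewrite -expr2 sqrtCK. Qed.

Let ctransB_B : ctrans B *m B = ctrans P *m diag_mx l *m P.
Proof.
apply/matrixP => a b; rewrite mul_mx_diag !mxE.
under eq_bigr do rewrite !mxE rmorphM /= sqrtl_conj mulrACA sqrtlK.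
rewrite -(big_enum_val (fun i => l 0 i * ((P i a)^* * P i b))) /=.
rewrite [RHS](bigID (mem S)) /= [X in _ = _ + X]big1 ?addr0 => [|i].
  by apply: eq_bigr => i _; rewrite !mxE mulrCA mulrA.
by rewrite inE negbK => /eqP li0; rewrite !mxE li0 mulr0 mul0r.
Qed.

Let B_ctransB : B *m ctrans B = diag_mx (\row_j l 0 (f j)).
Proof.
have PP : P *m ctrans P = 1%:M by apply/unitarymxP.
apply/matrixP => a b; rewrite !mxE.
under eq_bigr do rewrite !mxE rmorphM /= sqrtl_conj mulrACA.
rewrite -mulr_sumr.
have -> : \sum_c P (f a) c * (P (f b) c)^* = (f a == f b)%:R.
  by move/matrixP: PP => /(_ (f a) (f b)); rewrite !mxE => <-; apply: eq_bigr => c; rewrite !mxE.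
rewrite (inj_eq enum_val_inj); case: eqP => [->|_]; last by rewrite !mulr0n mulr0.
by rewrite !mulr1n mulr1 sqrtlK.
Qed.

Lemma unitary_diag_factor :
  exists k (B : 'M[R[i]]_(k, n)), row_free B /\ ctrans B *m B = ctrans P *m diag_mx l *m P.
Proof.
exists #|S|, B; split => //.
have unitBB : B *m ctrans B \in unitmx.
  rewrite B_ctransB unitmxE det_diag unitfE; apply/prodf_neq0 => j _.
  by rewrite mxE; have := enum_valP (A := mem S) j; rewrite inE.
have := mxrankM_maxl B (ctrans B); rewrite mxrank_unit // => rankB.
by rewrite /row_free eqn_leq rank_leq_row rankB.
Qed.

End UnitaryDiagFactor.

Lemma contraction_defect_factor (R : realType) n (X : 'M[R[i]]_n) :
  contraction X -> exists k (B : 'M[R[i]]_(k, n)), row_free B /\ ctrans B *m B = defect X.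
Proof.
move=> cX; set D := defect X; set P := spectralmx D; set l := spectral_diag D.
have unitaryP : P \is unitarymx by apply: spectral_unitarymx.
have PP : P *m ctrans P = 1%:M by apply/unitarymxP.
have DE : D = ctrans P *m diag_mx l *m P.
  have iP : invmx P = ctrans P := invmx_unitary unitaryP.
  rewrite -iP; apply/orthomx_spectralP/normalmxP.
  by rewrite -/(ctrans D) defect_ctrans.
have l_ge0 i : 0 <= l 0 i.
  have -> : l 0 i = (P *m D *m ctrans P) i i.
    by rewrite DE !mulmxA PP mul1mx -!mulmxA PP mulmx1 mxE eqxx mulr1n.
  have := contraction_defect_form (ctrans (row i P)) cX.
  rewrite ctransK !mxE; congr (_ <= _); apply: eq_bigr => j _; rewrite !mxE.
  by congr (_ * _); apply: eq_bigr => k _; rewrite !mxE.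
by rewrite DE; apply: unitary_diag_factor.
Qed.

Lemma tower_defect (R : realType) n (X : 'M[R[i]]_n) j : contraction X ->
  ctrans (Bmx (mx (tower X j))) *m Bmx (mx (tower X j)) = defect (mx (tower X j))
  /\ \rank (defect (mx (tower X j))) = \rank (defect X).
Proof.
move=> cX; elim: j => [|j [BB rankD]].
  have [k [B [freeB BB]]] := contraction_defect_factor cX.
  by have [] := defect_factor_Bmx freeB BB.
set T := tower X j in BB rankD *.
have DE := defect_block_mx BB.
have [freeI II] := row_mx10_factor R (\rank (defect (mx T))) (sz T).
have [_ ->] := defect_factor_Bmx freeI (etrans II (esym DE)).
by rewrite /= DE -II mxrank_ctrans_mul (eqP freeI).
Qed.

Section HermitianCombination.
Variable R : realType.
Local Notation C := R[i].

Definition hcomb m (Y : 'M[C]_m) (a b : C) : 'M[C]_m := a *: Y + b *: ctrans Y.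

Lemma hcomb_block d m (B : 'M[C]_(d, m)) (Y : 'M[C]_m) a b :
  hcomb (block_mx 0 B 0 Y) a b = block_mx 0 (a *: B) (b *: ctrans B) (hcomb Y a b).
Proof.
by rewrite /hcomb ctrans_block !ctrans0 !scale_block_mx add_block_mx !scaler0 !addr0 add0r.
Qed.

Lemma expiNK (t : R) : expi (- t) * expi t = 1 :> C.
Proof.
rewrite /expi cosN sinN; simpc.
by rewrite -!expr2 cos2Dsin2 [sin t * _]mulrC subrr.
Qed.

Lemma Hpart_hcomb m (Y : 'M[C]_m) t (r : C) :
  (2 * r) *: Hpart Y t = hcomb Y (r * expi (- t)) (r * expi t).
Proof.
by rewrite /Hpart /hcomb scalerA mulrAC divff ?mul1r ?pnatr_eq0 // scalerDr !scalerA.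
Qed.

End HermitianCombination.

Section TowerPencil.
Variables (R : realType) (n : nat) (X : 'M[R[i]]_n) (a b r : R[i]).
Hypotheses (cX : contraction X) (abr : a * b = r ^+ 2).
Local Notation d := (\rank (defect X)).
Local Notation ph k := (phirec 'X r%:P k).2.

Let Q j k := \det (phi_pencil 'X r%:P (map_mx polyC (hcomb (mx (tower X j)) a b))
                                    (map_mx polyC (defect (mx (tower X j)))) k).

Let Q_succ j k :
  Q j.+1 k * ph k.+1 ^+ sz (tower X j) = ph k.+1 ^+ d * ph k ^+ sz (tower X j) * Q j k.+1.
Proof.
have [BB rankD] := tower_defect j cX.
have abP : a%:P * b%:P = r%:P ^+ 2 by rewrite -rmorphM abr rmorphXn.
rewrite /Q /= (defect_block_mx BB) hcomb_block !map_block_mx !map_mx0 map_mx1 !map_mxZ.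
by rewrite det_phi_pencil_block // -map_mxM BB rankD.
Qed.

Lemma det_tower_pencil j k :
  Q j k * ph (k + j) ^+ n * ph k ^+ d = ph k ^+ sz (tower X j) * ph (k + j) ^+ d * Q 0 (k + j).
Proof.
elim: j k => [|j IH] k; first by rewrite addn0 -mulrA mulrC.
have [_ rankD] := tower_defect j cX.
have szE : sz (tower X j.+1) = (d + sz (tower X j))%N by rewrite -rankD.
have ph_neq0 : ph k.+1 ^+ sz (tower X j) * ph k.+1 ^+ d != 0.
  by rewrite mulf_neq0 ?expf_neq0 ?phirec_X_neq0.
apply: (mulIf ph_neq0); rewrite addnS -addSn szE exprD.
(* Abstract the determinants away: [ring] would otherwise compare them by conversion. *)
move: (Q_succ j k) (IH k.+1) => {IH ph_neq0}.
move: (Q j.+1 k) (Q j k.+1) (Q 0 (k.+1 + j)) => q q' q0.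
move: (ph k ^+ _) (ph k ^+ _) (ph k.+1 ^+ _) (ph k.+1 ^+ _).
move: (ph (k.+1 + j) ^+ _) (ph (k.+1 + j) ^+ _) => e f u v w y step IHk.
transitivity (q * y * (f * u * w)); first by ring.
by rewrite step; transitivity (v * u * w * (q' * f * w)); [ring | rewrite IHk; ring].
Qed.

Lemma det_tower_phi_pencil z j :
  \det (z%:M - hcomb (mx (tower X j)) a b) * (phirec z r j).2 ^+ n
  = (phirec z r j).2 ^+ d * \det (phi_pencil z r (hcomb X a b) (defect X) j).
Proof.
have evalC : horner_eval z \o polyC =1 id by move=> c; rewrite /= /horner_eval hornerC.
have := congr1 (horner_eval z) (det_tower_pencil j 0).
rewrite /Q !add0n !rmorphM !rmorphXn rmorph1 -!det_map_mx !map_phi_pencil -!map_mx_comp.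
have [_ ->] := rmorph_phirec (horner_eval z) 'X r%:P j.
rewrite !(map_mx_id evalC) /= /horner_eval hornerX hornerC.
by rewrite phi_pencil0 !expr1n mulr1 mul1r.
Qed.

End TowerPencil.

Lemma det_tower_Hpart (R : realType) n (X : 'M[R[i]]_n) j (t : R) (z r : R[i]) :
  contraction X -> (1 <= j)%N -> phi z r j != 0 ->
  \det (z%:M - (2 * r) *: Hpart (mx (tower X j)) t)
  = phi z r j ^+ \rank (defect X) *
    \det (z%:M - (2 * r) *: Hpart X t - (r ^+ 2 * (phi z r j.-1 / phi z r j)) *: defect X).
Proof.
case: j => // j cX _; rewrite /phi !phipairE => phi_neq0.
have abr : r * expi (- t) * (r * expi t) = r ^+ 2 by rewrite mulrACA expiNK mulr1 expr2.
rewrite !Hpart_hcomb; apply: (mulIf (expf_neq0 n phi_neq0)).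
rewrite (det_tower_phi_pencil cX abr) -mulrA; congr (_ * _).
rewrite [RHS]mulrC -detZ /phi_pencil [in RHS]scalerBr scalerA.
change (phirec z r j.+1.-1).2 with (phirec z r j.+1).1.
by congr (\det (_ - _ *: _)); field.
Qed.


Lemma phipair_chebU (R : realType) (r u : R[i]) k :
  (phipair (2 * r * u) r k).2 = r ^+ k * chebU u k
  /\ r * (phipair (2 * r * u) r k).1 = r ^+ k * (Upair u k).1.
Proof.
elim: k => [|k [IH2 IH1]]; first by rewrite expr0 !mul1r; split=> //; apply: mulr0.
split; last by rewrite [LHS]/= IH2 exprS mulrA.
have rphi' : r ^+ 2 * (phipair (2 * r * u) r k).1 = r * (r ^+ k * (Upair u k).1).
  by rewrite -IH1 expr2 mulrA.
change (2 * r * u * (phipair (2 * r * u) r k).2 - r ^+ 2 * (phipair (2 * r * u) r k).1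
        = r ^+ k.+1 * (2 * u * chebU u k - (Upair u k).1)).
by rewrite rphi' IH2 exprS; ring.
Qed.

Lemma det_tower_Hpart_chebU (R : realType) n (X : 'M[R[i]]_n) j (t : R) (r u : R[i]) :
  contraction X -> (1 <= j)%N -> r != 0 -> chebU u j != 0 ->
  \det ((2 * r * u)%:M - (2 * r) *: Hpart (mx (tower X j)) t)
  = (2 * r) ^+ n * r ^+ (j * \rank (defect X)) * chebU u j ^+ \rank (defect X) *
    \det (u%:M - Hpart X t - tau u j *: defect X).
Proof.
case: j => // j cX _ r_neq0 U_neq0; have [phiE phi'E] := phipair_chebU r u j.+1.
have phi_neq0 : phi (2 * r * u) r j.+1 != 0 by rewrite /phi phiE mulf_neq0 ?expf_neq0.
have tauE : r ^+ 2 * (phi (2 * r * u) r j.+1.-1 / phi (2 * r * u) r j.+1) = 2 * r * tau u j.+1.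
  change (phi _ r j.+1.-1) with (phipair (2 * r * u) r j.+1).1.
  rewrite /phi phiE expr2 -mulrA [r * (_ / _)]mulrA phi'E /tau.
  change (chebU u j.+1.-1) with (Upair u j.+1).1.
  by field; apply/andP; split; [exact: U_neq0 | exact: expf_neq0].
rewrite det_tower_Hpart // tauE -scale_scalar_mx -[(2 * r * _) *: _]scalerA -!scalerBr.
rewrite detZ /phi phiE exprMn -exprM [LHS]mulrC -!mulrA; congr (_ * _).
by rewrite mulrC -mulrA.
Qed.

Theorem mainTheorem3 (R : realType) (n : nat) (X : 'M[R[i]]_n) :
  contraction X ->
  let D := defect X in
  let d := \rank D in
  forall j : nat, (1 <= j)%N ->
  (forall (t : R) (z r : R[i]), phi z r j != 0 ->
     \det (z%:M - (2 * r) *: Hpart (mx (tower X j)) t)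
     = phi z r j ^+ d *
       \det (z%:M - (2 * r) *: Hpart X t
               - (r ^+ 2 * (phi z r j.-1 / phi z r j)) *: D))
  /\
  (forall (t : R) (r u : R[i]), r != 0 -> chebU u j != 0 ->
     \det ((2 * r * u)%:M - (2 * r) *: Hpart (mx (tower X j)) t)
     = (2 * r) ^+ n * r ^+ (j * d) * chebU u j ^+ d *
       \det (u%:M - Hpart X t - tau u j *: D)).
Proof.
move=> cX D d j j_gt0; split=> t.
  by move=> z r; apply: det_tower_Hpart.
by move=> r u; apply: det_tower_Hpart_chebU.
Qed.
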